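(* Let $C$ be a field, $W$ a $C$-vector space of dimension $r$, and let $W_{i,j}$ ($i=1,\dots,n$; $j=1,\dots,\ell$, with $\ell\leq r$) be subspaces of $W$, given by bases, such that $W=\bigoplus_{j=1}^{\ell}W_{i,j}$ for each $i=1,\dots,n$. For a tuple $\mathbf k=(k_1,\dots,k_m)$ with $m\le n$ write $W_{\mathbf k}:=\bigcap_{i=1}^{m}W_{i,k_i}$. Consider the following algorithm: (1) set $U:=\{(j): 1\le j\le \ell,\ W_{1,j}\neq\{0\}\}$; (2) for $i=2,\dots,n$: set $U_{\mathrm{new}}:=\emptyset$; for each $j=1,\dots,\ell$ and each $\mathbf k\in U$, if $W_{\mathbf k}\cap W_{i,j}\neq\{0\}$ then add the tuple $(\mathbf k,j)$ (i.e. $\mathbf k$ with $j$ appended) to $U_{\mathrm{new}}$; afterwards set $U:=U_{\mathrm{new}}$; (3) return $U$. Then the algorithm is correct, i.e. it returns exactly the set of all tuples $\mathbf j=(j_1,\dots,j_n)\in\{1,\dots,\ell\}^n$ with $\bigcap_{i=1}^n W_{i,j_i}\neq\{0\}$, and, if bases of the spaces $W_{\mathbf k}$ for $\mathbf k\in U$ are cached (so that a basis of $W_{(\mathbf k,j)}=W_{\mathbf k}\cap W_{i,j}$ is available from the intersection test), it needs no more than $8nr^4$ operations in $C$.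
   Context: Operations are counted as arithmetic operations in $C$, with the convention that the intersection of two subspaces of $W$ of dimensions $d_1,d_2$ (given by bases, yielding a basis of the intersection) is computed, e.g. by Gaussian elimination, using no more than $\min(r,d_1+d_2)^2\max(r,d_1+d_2)$ operations in $C$. *)

From mathcomp Require Import all_boot all_order all_algebra.
Set Implicit Arguments. Unset Strict Implicit. Unset Printing Implicit Defensive.
Import GRing.Theory.
Local Open Scope ring_scope.

Section IntersectionAlgorithm.
Variables (C : fieldType) (r n l : nat).
(* The ambient space W is the row space 'rV[C]_r; a subspace is represented
   by a matrix whose rows span it (its given basis). W i j is W_{i+1,j+1}. *)
Variable W : 'I_n -> 'I_l -> 'M[C]_r.

(* W at a natural-number row index (0 outside range; never used there). *)
Definition Wat (i : nat) (j : 'I_l) : 'M[C]_r :=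
  if insub i is Some i' then W i' j else 0.

Fixpoint Wk_from (i : nat) (k : seq 'I_l) : 'M[C]_r :=
  match k with
  | [::] => 1%:M
  | j :: k' => (Wat i j :&: Wk_from i.+1 k')%MS
  end.
Definition Wk (k : seq 'I_l) : 'M[C]_r := Wk_from 0 k.

(* cost of intersecting subspaces of dimensions d1, d2 *)
Definition icost (d1 d2 : nat) : nat :=
  (minn r (d1 + d2) ^ 2 * maxn r (d1 + d2))%N.

(* step (1): no arithmetic needed (a given basis is empty or not) *)
Definition U0 : seq (seq 'I_l) :=
  [seq [:: j] | j <- enum 'I_l & (Wat 0 j != 0)%MS].

(* step (2) for (0-indexed) row i: new U, and its cost, where for each j and
   each k in U the cached basis of W_k is intersected with the basis of W_{i,j}. *)
Definition newU (i : nat) (U : seq (seq 'I_l)) : seq (seq 'I_l) :=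
  [seq rcons k j | j <- enum 'I_l,
                   k <- [seq k <- U | (Wk k :&: Wat i j != 0)%MS]].
Definition stepcost (i : nat) (U : seq (seq 'I_l)) : nat :=
  (\sum_(j <- enum 'I_l) \sum_(k <- U) icost (\rank (Wk k)) (\rank (Wat i j)))%N.

Definition step (s : seq (seq 'I_l) * nat) (i : nat) :=
  (newU i s.1, (s.2 + stepcost i s.1)%N).

(* run: returns (U, number of field operations used) *)
Definition algo : seq (seq 'I_l) * nat := foldl step (U0, 0%N) (iota 1 n.-1).
End IntersectionAlgorithm.

From mathcomp Require Import all_boot all_order all_algebra zify.
Set Implicit Arguments. Unset Strict Implicit. Unset Printing Implicit Defensive.
Import GRing.Theory.
Local Open Scope ring_scope.

(* After round i the list U holds exactly the prefixes k of length i.+1 with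
   W_k <> 0.  As W = (+)_j W_{i,j} is direct, every W_k splits into the direct
   sum of the W_k :&: W_{i,j}, so the total dimension sum_(k in U) dim W_k
   never increases and stays <= r; in particular U has at most r members,
   all nonzero.  A round intersects each of them with the l <= r blocks
   W_{i,j} at cost <= r^2 (dim W_k + dim W_{i,j}), hence <= 2 r^4 in total. *)

Lemma mxdirect_sumsS (F : fieldType) (I : finType) (n : nat) (A B : I -> 'M[F]_n) :
  (forall j, A j <= B j)%MS ->
  mxdirect (\sum_j B j)%MS -> mxdirect (\sum_j A j)%MS.
Proof.
move=> sAB /mxdirect_sumsP dB; apply/mxdirect_sumsP => i _; apply/eqP.
rewrite -submx0 -[X in (_ <= X)%MS](dB i isT) capmxS //.
by apply/sumsmx_subP => j /andP[_ ji]; rewrite (sumsmx_sup j) ?ji.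
Qed.

Lemma sum_rank_capmx_le (F : fieldType) (I : finType) (n : nat)
    (A : 'M[F]_n) (B : I -> 'M[F]_n) :
  mxdirect (\sum_j B j)%MS -> (\sum_j \rank (A :&: B j) <= \rank A)%N.
Proof.
move=> /(mxdirect_sumsS (fun j => capmxSr A (B j))); rewrite mxdirectE /= => /eqP <-.
by apply: mxrankS; apply/sumsmx_subP => j _; apply: capmxSl.
Qed.

Lemma Wk_from_rcons (C : fieldType) (r n l : nat) (W : 'I_n -> 'I_l -> 'M[C]_r)
    (s : nat) (k : seq 'I_l) (j : 'I_l) :
  Wk_from W s (rcons k j) = (Wk_from W s k :&: Wat W (s + size k) j)%MS.
Proof.
elim: k s => [|a k IHk] s /=; first by rewrite addn0 capmx1 cap1mx.
by rewrite IHk capmxA addSnnS.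
Qed.

Lemma icost_le (r d e : nat) : (icost r d e <= r ^ 2 * (d + e))%N.
Proof. by rewrite /icost; case: (leqP r (d + e)) => // lt_r; nia. Qed.

Section Algorithm.
Variables (C : fieldType) (r n l : nat) (W : 'I_n -> 'I_l -> 'M[C]_r).
Hypothesis W_direct : forall i : 'I_n, mxdirect (\sum_(j < l) W i j)%MS.
Hypothesis le_lr : (l <= r)%N.

Lemma sum_rank_capWat (i : nat) (A : 'M[C]_r) : (i < n)%N ->
  (\sum_(j <- enum 'I_l) \rank (A :&: Wat W i j) <= \rank A)%N.
Proof.
move=> lt_in; rewrite big_enum /= /Wat insubT.
exact: sum_rank_capmx_le.
Qed.

Lemma sum_rank_Wat (i : nat) : (i < n)%N ->
  (\sum_(j <- enum 'I_l) \rank (Wat W i j) <= r)%N.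
Proof.
move=> /(sum_rank_capWat 1%:M); rewrite mxrank1.
by under eq_bigr do rewrite cap1mx.
Qed.

Lemma mem_newU_rcons (i : nat) (U : seq (seq 'I_l)) (k : seq 'I_l) (j : 'I_l) :
  (rcons k j \in newU W i U) = (k \in U) && (Wk W k :&: Wat W i j != 0)%MS.
Proof.
apply/allpairsPdep/andP => [[j' [k' [_ Uk' /rcons_inj [-> ->]]]] | [Uk kj_neq0]].
  by move: Uk'; rewrite mem_filter => /andP[-> ->].
by exists j, k; rewrite mem_enum mem_filter Uk kj_neq0.
Qed.

Lemma nil_notin_newU (i : nat) (U : seq (seq 'I_l)) : ([::] \in newU W i U) = false.
Proof. by apply/allpairsPdep => [[j [[|? ?] [_ _]]]]. Qed.

Definition lists_nonzero_Wk (m : nat) (U : seq (seq 'I_l)) :=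
  forall js, (js \in U) = (size js == m) && (Wk W js != 0)%MS.

Lemma lists_nonzero_Wk_U0 : lists_nonzero_Wk 1 (U0 W).
Proof.
move=> [|j [|? ?]]; rewrite ?andbF; try by apply/mapP => -[].
rewrite mem_map; last by move=> ? ? [].
by rewrite mem_filter mem_enum /Wk /= capmx1 andbT.
Qed.

Lemma lists_nonzero_Wk_newU (i : nat) (U : seq (seq 'I_l)) :
  lists_nonzero_Wk i U -> lists_nonzero_Wk i.+1 (newU W i U).
Proof.
move=> defU; case/lastP => [|k j]; first by rewrite nil_notin_newU.
rewrite mem_newU_rcons defU size_rcons eqSS /Wk Wk_from_rcons add0n.
have [->|] //= := eqVneq (size k) i.
have [Wk0|] //= := eqVneq (Wk_from W 0 k) 0.
by rewrite Wk0 cap0mx eqxx.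
Qed.

Definition dimsum (U : seq (seq 'I_l)) := (\sum_(k <- U) \rank (Wk W k))%N.

Lemma dimsum_U0 : (0 < n)%N -> (dimsum (U0 W) <= r)%N.
Proof.
move=> n_gt0; apply: leq_trans (sum_rank_Wat n_gt0).
rewrite /dimsum big_map big_filter big_mkcond /= leq_sum // => j _.
by case: ifP; rewrite // /Wk /= capmx1.
Qed.

Lemma dimsum_newU (i : nat) (U : seq (seq 'I_l)) :
  (i < n)%N -> lists_nonzero_Wk i U -> (dimsum (newU W i U) <= dimsum U)%N.
Proof.
move=> lt_in defU; rewrite /dimsum big_allpairs_dep /=.
apply: (@leq_trans (\sum_(j <- enum 'I_l) \sum_(k <- U) \rank (Wk W k :&: Wat W i j))%N).
  apply: leq_sum => j _; rewrite big_filter big_mkcond big_seq [X in (_ <= X)%N]big_seq.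
  apply: leq_sum => k; rewrite defU => /andP[/eqP size_k _].
  by case: ifP; rewrite // /Wk Wk_from_rcons add0n size_k.
by rewrite exchange_big leq_sum // => k _; apply: sum_rank_capWat.
Qed.

Lemma size_le_dimsum (m : nat) (U : seq (seq 'I_l)) :
  lists_nonzero_Wk m U -> (size U <= dimsum U)%N.
Proof.
move=> defU; rewrite -sum1_size /dimsum big_seq [X in (_ <= X)%N]big_seq.
by apply: leq_sum => k; rewrite defU lt0n mxrank_eq0 => /andP[].
Qed.

Lemma stepcost_le (i : nat) (U : seq (seq 'I_l)) :
  (i < n)%N -> lists_nonzero_Wk i U -> (dimsum U <= r)%N ->
  (stepcost W i U <= 2 * r ^ 4)%N.
Proof.
move=> lt_in defU dimU.
set E := (\sum_(j <- enum 'I_l) \rank (Wat W i j))%N.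
have cost_sum : (stepcost W i U <= r ^ 2 *
    \sum_(j <- enum 'I_l) \sum_(k <- U) (\rank (Wk W k) + \rank (Wat W i j)))%N.
  rewrite /stepcost big_distrr leq_sum // => j _.
  by rewrite big_distrr leq_sum // => k _; apply: icost_le.
have sum_eq : (\sum_(j <- enum 'I_l) \sum_(k <- U) (\rank (Wk W k) + \rank (Wat W i j))
    = l * dimsum U + size U * E)%N.
  under eq_bigr do rewrite big_split /=.
  rewrite big_split /= exchange_big /= -sum1_size /E /dimsum big_distrr big_distrl /=.
  congr (_ + _); last by rewrite exchange_big; apply: eq_bigr => k _; rewrite mul1n.
  by apply: eq_bigr => k _; rewrite big_enum /= sum_nat_const card_ord.
have sizeU := size_le_dimsum defU; have dimE : (E <= r)%N := sum_rank_Wat lt_in.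
have sum_le : (l * dimsum U + size U * E <= 2 * (r * r))%N by nia.
rewrite sum_eq in cost_sum; apply: (leq_trans cost_sum).
apply: (leq_trans (leq_mul (leqnn _) sum_le)).
by rewrite mulnCA mulnn -expnD.
Qed.

Lemma algo_prefix (m : nat) : (m < n)%N ->
  let s := foldl (step W) (U0 W, 0%N) (iota 1 m) in
  [/\ lists_nonzero_Wk m.+1 s.1, (dimsum s.1 <= r)%N & (s.2 <= 2 * m * r ^ 4)%N].
Proof.
elim: m => [n_gt0 | m IHm lt_m1n]; first by split; [apply: lists_nonzero_Wk_U0 | apply: dimsum_U0 |].
have -> : iota 1 m.+1 = rcons (iota 1 m) m.+1 by rewrite -cats1 -[m.+1]addn1 iotaD addnC.
rewrite -cats1 foldl_cat /=.
case: (foldl _ _ _) (IHm (ltnW lt_m1n)) => U c /= [defU dimU costc].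
split; [exact: lists_nonzero_Wk_newU | exact: leq_trans (dimsum_newU lt_m1n defU) dimU |].
by rewrite mulnSr mulnDl leq_add // stepcost_le.
Qed.
End Algorithm.

Theorem theorem1 (C : fieldType) (r n l : nat) (W : 'I_n -> 'I_l -> 'M[C]_r)
  (hn : (0 < n)%N) (hl : (l <= r)%N)
  (hdirect : forall i : 'I_n, mxdirect (\sum_(j < l) W i j)%MS)
  (hspan : forall i : 'I_n, (\sum_(j < l) W i j == 1%:M)%MS) :
  (forall js : seq 'I_l,
      (js \in (algo W).1) = (size js == n) && (Wk W js != 0)%MS)
  /\ ((algo W).2 <= 8 * n * r ^ 4)%N.
Proof.
have lt_pn_n : (n.-1 < n)%N by rewrite ltn_predL.
have [defU _ cost] := algo_prefix hdirect hl lt_pn_n.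
rewrite /algo; split; first by move=> js; rewrite defU prednK.
apply: leq_trans cost _; rewrite leq_mul2r leq_mul ?leq_pred ?orbT //.
Qed.
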